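(* Let $n>d\geq 1$ and let $\Phi$ be a real, additive gain graph on vertex set $V=\{1,\dots,n\}$ with edge set $E$. Then there is an open dense subset $\mathcal{G}\subseteq(\mathbb{E}^d)^n$ of $n$-tuples of distinct points such that for every $\mathbf{Q}=(Q_1,\dots,Q_n)\in\mathcal{G}$, writing $\mathcal{H}=\mathcal{H}(\Phi;\mathbf{Q})$, the following hold. (a) For every edge set $S\subseteq E$, writing $c(S)=n-m$, the intersection $\bigcap_{e\in S}h(e)$ is empty if $S$ is unbalanced or if $m>d$; otherwise it is a nonempty affine flat of dimension $d-m$. (b) For edge sets $S_1,S_2\subseteq E$, the intersections $\bigcap_{e\in S_1}h(e)$ and $\bigcap_{e\in S_2}h(e)$ are equal and nonempty if and only if $S_1\cup S_2$ is balanced and the connected components of $(V,S_1)$ and of $(V,S_2)$ partition $V$ in the same way, into at least $n-d$ parts.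
   Context: $\mathbb{E}^d$ is Euclidean $d$-space with distance $d(\cdot,\cdot)$. For points $Q_i,Q_j$ the Pythagorean coordinate of a point $P$ is $\psi_{ij}(P)=d(P,Q_i)^2-d(P,Q_j)^2$; if $Q_i\neq Q_j$, each level set $\{\psi_{ij}=c\}$ is a hyperplane perpendicular to the line $Q_iQ_j$. A real, additive gain graph $\Phi$ on vertex set $V=\{1,\dots,n\}$ consists of a finite graph with edge set $E$ (multiple edges allowed; every edge has two distinct endpoints) together with a gain function assigning to each edge $e$ with endpoints $i,j$ a real number $\phi(e;i,j)$, where $\phi(e;j,i)=-\phi(e;i,j)$. An edge set $S\subseteq E$ is balanced if for every circle (simple closed path) contained in $S$ the sum of the gains of its edges, read in a consistent direction around the circle, is $0$. $c(S)$ denotes the number of connected components of the spanning subgraph $(V,S)$, isolated vertices counting as components. For $\mathbf{Q}=(Q_1,\dots,Q_n)\in(\mathbb{E}^d)^n$ with $Q_i\neq Q_j$ whenever $i,j$ are adjacent, the Pythagorean arrangement $\mathcal{H}(\Phi;\mathbf{Q})$ consists of the hyperplanes $h(e)=\{P\in\mathbb{E}^d:\psi_{ij}(P)=\phi(e;i,j)\}$, one for each edge $e$ with endpoints $i,j$. The intersection over the empty edge set is $\mathbb{E}^d$. *)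

From HB Require Import structures.
From mathcomp Require Import all_boot all_order all_algebra.
From mathcomp Require Import all_classical all_reals all_analysis.
Set Implicit Arguments. Unset Strict Implicit. Unset Printing Implicit Defensive.
Import Order.TTheory GRing.Theory Num.Theory.
Import numFieldNormedType.Exports.
Local Open Scope ring_scope.

(* Euclidean d-space is modelled as row vectors 'rV[R]_d over a realType R;
   an n-tuple of points (Q_1,...,Q_n) is an n x d matrix whose i-th row is Q_i.
   The gain graph: finite edge type E, endpoints src e, tgt e (distinct),
   gain phi e = phi(e; src e, tgt e), so phi(e; tgt e, src e) = - phi e. *)

Section GainGraph.
Variables (R : realType) (n d : nat) (E : finType).
Variables (src tgt : E -> 'I_n) (phi : E -> R).

Definition sqdist (P Q : 'rV[R]_d) : R := \sum_(k < d) (P 0 k - Q 0 k) ^+ 2.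

Definition pyth (Qi Qj P : 'rV[R]_d) : R := sqdist P Qi - sqdist P Qj.

Definition joins (e : E) (i j : 'I_n) : bool :=
  ((src e == i) && (tgt e == j)) || ((src e == j) && (tgt e == i)).

(* gain phi(e; i, j) of e read from i to j (meaningful when joins e i j) *)
Definition ogain (e : E) (i j : 'I_n) : R :=
  if (src e == i) && (tgt e == j) then phi e else - phi e.

Definition is_circle (S : {set E}) (k : nat)
    (vs : 'I_k.+1 -> 'I_n) (es : 'I_k.+1 -> E) : Prop :=
  [/\ injective vs, injective es, forall t, es t \in S &
      forall t, joins (es t) (vs t) (vs (ordS t))].

Definition balanced (S : {set E}) : Prop :=
  forall (k : nat) (vs : 'I_k.+1 -> 'I_n) (es : 'I_k.+1 -> E),
    is_circle S vs es ->
    \sum_(t < k.+1) ogain (es t) (vs t) (vs (ordS t)) = 0.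

Definition adj (S : {set E}) : rel 'I_n :=
  fun i j => [exists e, (e \in S) && joins e i j].

(* connected components of (V, S) (isolated vertices are components) *)
Definition components (S : {set E}) : {set {set 'I_n}} :=
  [set [set j | connect (adj S) i j] | i : 'I_n].

Definition ncomp (S : {set E}) : nat := #|components S|.

Local Open Scope classical_set_scope.

Definition hyp (Q : 'M[R]_(n, d)) (e : E) : set 'rV[R]_d :=
  [set P | pyth (row (src e) Q) (row (tgt e) Q) P = phi e].

(* intersection of h(e) over e in S (= whole space when S is empty) *)
Definition flatI (Q : 'M[R]_(n, d)) (S : {set E}) : set 'rV[R]_d :=
  [set P | forall e, e \in S -> hyp Q e P].

Definition affine_flat (A : set 'rV[R]_d) (k : nat) : Prop :=
  exists (P0 : 'rV[R]_d) (U : 'M[R]_d),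
    \rank U = k /\ A = [set P | (P - P0 <= U)%MS].

End GainGraph.

From Pilot Require Import Defs.
From HB Require Import structures.
From mathcomp Require Import all_boot all_order all_algebra.
From mathcomp Require Import all_classical all_reals all_analysis.
From mathcomp Require Import zify ring lra.
Import Order.TTheory GRing.Theory Num.Theory.
Import numFieldNormedType.Exports.
Local Open Scope classical_set_scope.
Local Open Scope ring_scope.
Set Implicit Arguments. Unset Strict Implicit.

(* Along a spanning forest of [(V, S)], a potential [F] of a balanced [S]
   turns the hyperplanes of [S] into the [n - c(S)] conditions
   [d(P, Q_v)^2 - F v = d(P, Q_r)^2 - F r] (one per non-root [v] with root
   [r]), which are affine in [P] with coefficient columns [2 (Q_v - Q_r)];
   unbalanced [S] give no point at all.  Maximal rank of every such system (of
   the augmented one when [n - c(S) > d]) is the nonvanishing of finitely many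
   Gram determinants, polynomial in [Q] and nonzero at suitable explicit
   configurations, hence holds on an open dense set.  There (a) is rank
   counting; in (b), equal nonempty flats of [S1], [S2] and [S1 :|: S2] have
   equal dimensions, so the three graphs have as many components, hence the
   same ones. *)

Section RegularFunctions.
Variables (R : realType) (V : normedModType R).

Definition polynomial_on_lines (f : V -> R) :=
  forall x y : V, exists p : {poly R}, forall t, f (x + t *: y) = p.[t].

Definition regular (f : V -> R) := continuous f /\ polynomial_on_lines f.

Lemma open_nonzero (f : V -> R) : continuous f -> open [set x | f x != 0].
Proof.
move=> cf; apply: (@open_comp _ _ f [set r : R | r != 0]); last exact: open_neq.
by move=> x _; apply: cf.
Qed.

(* A nonzero polynomial has finitely many roots, so [f] is nonzero at points
   of the segment from [x] to [x0] arbitrarily close to [x]. *)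
Lemma dense_nonzero (f : V -> R) : polynomial_on_lines f ->
  (exists x0, f x0 != 0) -> dense [set x | f x != 0].
Proof.
move=> fpoly [x0 fx0] O [x Ox] oO.
have /nbhs_ballP [e e0 eO] : nbhs x O by move: oO; rewrite openE => /(_ x Ox).
have [p Hp] := fpoly x (x0 - x).
have pn0 : p != 0.
  apply: contraNneq fx0 => p0.
  by rewrite -[x0](subrK x) addrC -[_ - x]scale1r Hp p0 horner0.
set c := e / (`|x0 - x| + 1).
have c0 : 0 < c by rewrite divr_gt0 // ltr_wpDl.
pose ts := [seq c / k.+1%:R | k <- iota 0 (size p)].
have /allPn [t /mapP [k _ ->] pt] : ~~ all (root p) ts.
  apply/negP => rts; suff uts : uniq ts.
    by have := max_poly_roots pn0 rts uts; rewrite size_map size_iota ltnn.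
  rewrite map_inj_uniq ?iota_uniq // => k l /eqP.
  rewrite eqr_div ?pnatr_eq0 // (inj_eq (mulfI (lt0r_neq0 c0))) eqr_nat.
  by move=> /eqP [].
exists (x + c / k.+1%:R *: (x0 - x)); split; last by rewrite /= Hp.
have ck : 0 < c / k.+1%:R by rewrite divr_gt0.
apply: eO; rewrite -ball_normE /ball_ /= opprD addrA subrr add0r normrN normrZ.
rewrite gtr0_norm //; apply: (@le_lt_trans _ _ (c * `|x0 - x|)).
  apply: ler_wpM2r => //; rewrite ler_pdivrMr ?ltr0Sn // ler_peMr ?(ltW c0) //.
  by rewrite ler1n.
by rewrite /c mulrAC ltr_pdivrMr ?ltr_wpDl // ltr_pM2l // ltrDl.
Qed.

Lemma open_dense_nonzero_family (I : finType) (f : I -> V -> R) :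
  (forall i, regular (f i)) -> (forall i, exists x, f i x != 0) ->
  open [set x | forall i, f i x != 0] /\ dense [set x | forall i, f i x != 0].
Proof.
move=> freg fnz.
suff /(_ (enum I)) : forall s : seq I,
    open [set x | forall i, i \in s -> f i x != 0] /\
    dense [set x | forall i, i \in s -> f i x != 0].
  have -> // : [set x | forall i, i \in enum I -> f i x != 0] =
               [set x | forall i, f i x != 0].
  by apply/seteqP; split => x /= fx i; [apply: fx; rewrite mem_enum | move=> _].
elim => [|i s [os ds]].
  have -> : [set x | forall i, i \in [::] -> f i x != 0] = setT by apply/seteqP.
  by split; [exact: openT | move=> O O0 _; rewrite setIT].
have -> : [set x | forall j, j \in i :: s -> f j x != 0] =
    [set x | f i x != 0] `&` [set x | forall j, j \in s -> f j x != 0].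
  apply/seteqP; split => x /=.
    by move=> fx; split => [|j js]; apply: fx; rewrite inE ?eqxx ?js ?orbT.
  by move=> [fxi fxs] j; rewrite inE => /orP [/eqP -> // | /fxs].
have [fcont fpoly] := freg i.
split; first by apply: openI => //; exact: open_nonzero.
by apply: denseI => //; [exact: open_nonzero | exact: dense_nonzero].
Qed.

Lemma regular_cst (c : R) : regular (fun=> c).
Proof.
split; first exact: cst_continuous.
by move=> x y; exists c%:P => t; rewrite hornerC.
Qed.

Lemma regularD f g : regular f -> regular g -> regular (fun x => f x + g x).
Proof.
move=> [cf pf] [cg pg]; split.
  by move=> x; apply: continuousD; [apply: cf | apply: cg].
move=> x y; have [p Hp] := pf x y; have [q Hq] := pg x y.
by exists (p + q) => t; rewrite Hp Hq hornerD.
Qed.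

Lemma regularM f g : regular f -> regular g -> regular (fun x => f x * g x).
Proof.
move=> [cf pf] [cg pg]; split.
  by move=> x; apply: continuousM; [apply: cf | apply: cg].
move=> x y; have [p Hp] := pf x y; have [q Hq] := pg x y.
by exists (p * q) => t; rewrite Hp Hq hornerM.
Qed.

Lemma regularN f : regular f -> regular (fun x => - f x).
Proof.
move=> rf; have := regularM (regular_cst (-1)) rf.
by under eq_fun do rewrite mulN1r.
Qed.

Lemma regularB f g : regular f -> regular g -> regular (fun x => f x - g x).
Proof. by move=> rf rg; apply/regularD/regularN. Qed.

Lemma regular_sum (I : Type) (r : seq I) (P : pred I) (F : I -> V -> R) :
  (forall i, regular (F i)) -> regular (fun x => \sum_(i <- r | P i) F i x).
Proof.
move=> rF; elim: r => [|i r IH].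
  by under eq_fun do rewrite big_nil; exact: regular_cst.
under eq_fun do rewrite big_cons; case: (P i) => //.
exact: regularD.
Qed.

Lemma regular_prod (I : Type) (r : seq I) (P : pred I) (F : I -> V -> R) :
  (forall i, regular (F i)) -> regular (fun x => \prod_(i <- r | P i) F i x).
Proof.
move=> rF; elim: r => [|i r IH].
  by under eq_fun do rewrite big_nil; exact: regular_cst.
under eq_fun do rewrite big_cons; case: (P i) => //.
exact: regularM.
Qed.

End RegularFunctions.

Lemma regular_coord (R : realType) (p q : nat) (i : 'I_p) (j : 'I_q) :
  regular (fun M : 'M[R]_(p, q) => M i j).
Proof.
split; first exact: coord_continuous.
move=> M N; exists ((M i j)%:P + (N i j)%:P * 'X) => t.
by rewrite !mxE hornerD hornerM hornerX !hornerC mulrC.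
Qed.

Section RegularMatrices.
Variables (R : realType) (V : normedModType R).

Definition regular_mx p q (M : V -> 'M[R]_(p, q)) :=
  forall i j, regular (fun x => M x i j).

Lemma regular_mx_mul p q r (M : V -> 'M[R]_(p, q)) (N : V -> 'M[R]_(q, r)) :
  regular_mx M -> regular_mx N -> regular_mx (fun x => M x *m N x).
Proof.
move=> rM rN i j; under eq_fun do rewrite mxE.
by apply: regular_sum => k; apply: regularM.
Qed.

Lemma regular_mx_tr p q (M : V -> 'M[R]_(p, q)) :
  regular_mx M -> regular_mx (fun x => (M x)^T).
Proof. by move=> rM i j; under eq_fun do rewrite mxE. Qed.

Lemma regular_mx_col p1 p2 q (M : V -> 'M[R]_(p1, q)) (N : V -> 'M[R]_(p2, q)) :
  regular_mx M -> regular_mx N -> regular_mx (fun x => col_mx (M x) (N x)).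
Proof.
move=> rM rN i j; under eq_fun do rewrite mxE.
by case: splitP => k _; [apply: rM | apply: rN].
Qed.

Lemma regular_det k (M : V -> 'M[R]_k) :
  regular_mx M -> regular (fun x => \det (M x)).
Proof.
move=> rM; apply: regular_sum => s; apply: regularM; first exact: regular_cst.
by apply: regular_prod => i; apply: rM.
Qed.

End RegularMatrices.

Lemma sum_ordS_telescope (V : zmodType) k (g : 'I_k.+1 -> V) :
  \sum_(t < k.+1) (g t - g (ordS t)) = 0.
Proof. by rewrite sumrB (reindex_inj (@ordS_inj k.+1)) subrr. Qed.

Lemma sumr_delta (V : pzRingType) p (g : 'I_p -> V) (j : 'I_p) :
  \sum_(l < p) g l * (l == j :> nat)%:R = g j.
Proof.
rewrite (bigD1 j) //= eqxx mulr1 big1 ?addr0 // => l.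
by rewrite -(inj_eq val_inj) => /negbTE ->; rewrite mulr0.
Qed.

Section Components.
Local Close Scope classical_set_scope.
Variables (n : nat) (E : finType) (src tgt : E -> 'I_n).
Local Notation adj := (adj src tgt).
Local Notation joins := (joins src tgt).
Local Notation components := (components src tgt).
Local Notation ncomp := (ncomp src tgt).
Local Notation root S := (fingraph.root (adj S)).

Lemma joins_sym e i j : joins e i j = joins e j i.
Proof. by rewrite /joins orbC. Qed.

Lemma joinsP e i j : joins e i j ->
  (src e = i /\ tgt e = j) \/ (src e = j /\ tgt e = i).
Proof. by case/orP => /andP [/eqP -> /eqP ->]; [left | right]. Qed.

Lemma joins_endpoints e a b c d : joins e a b -> joins e c d ->
  (a = c /\ b = d) \/ (a = d /\ b = c).
Proof. by case/joinsP => -[<- <-] /joinsP [[<- <-] | [<- <-]]; tauto. Qed.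

Lemma adj_sym (S : {set E}) : symmetric (adj S).
Proof. by move=> i j; apply/existsP/existsP => -[e]; exists e; rewrite joins_sym. Qed.

Lemma adj_connect_sym (S : {set E}) : connect_sym (adj S).
Proof. exact/sym_connect_sym/adj_sym. Qed.

Lemma adj_edge (S : {set E}) e : e \in S -> adj S (src e) (tgt e).
Proof. by move=> eS; apply/existsP; exists e; rewrite eS /joins !eqxx. Qed.

Lemma connect_subset (S S' : {set E}) : S \subset S' ->
  forall i j, connect (adj S) i j -> connect (adj S') i j.
Proof.
move=> sSS'; apply: connect_sub => i j /existsP [e /andP [eS je]].
by apply/connect1/existsP; exists e; rewrite je (fintype.subsetP sSS').
Qed.

Lemma edge_invariant_connect (T : eqType) (S : {set E}) (h : 'I_n -> T) :
  (forall e, e \in S -> h (src e) = h (tgt e)) <->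
  (forall i j, connect (adj S) i j -> h i = h j).
Proof.
split=> [hS i j | hconn e eS]; last exact/hconn/connect1/adj_edge.
have hclosed : closed_mem (adj S) (mem [pred k | h k == h i]).
  move=> x y /existsP [e /andP [eS /joinsP [[<- <-] | [<- <-]]]];
  by rewrite !inE (hS e eS).
by move/(closed_connect hclosed); rewrite !inE eqxx => /esym /eqP /esym.
Qed.

Definition roots (S : {set E}) : {set 'I_n} := [set i | root S i == i].

Definition nonroots (S : {set E}) : {set 'I_n} := [set i | root S i != i].

Lemma connect_invariant_nonroots (T : Type) (S : {set E}) (h : 'I_n -> T) :
  (forall i j, connect (adj S) i j -> h i = h j) <->
  (forall k : 'I_#|nonroots S|, h (enum_val k) = h (root S (enum_val k))).
Proof.
have csym := adj_connect_sym S.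
split=> [hconn k | hroot]; first by apply/hconn/connect_root.
have h_root i : h i = h (root S i).
  case: (boolP (i \in nonroots S)) => [iS | ]; last by rewrite inE negbK => /eqP ->.
  by rewrite -{1 2}(enum_rankK_in iS iS) hroot.
by move=> i j /(fingraph.rootP csym) rij; rewrite h_root rij -h_root.
Qed.

Lemma ncomp_roots (S : {set E}) : ncomp S = #|roots S|.
Proof.
have csym := adj_connect_sym S.
pose comp i := [set j | connect (adj S) i j].
rewrite /Defs.ncomp.
have -> : components S = comp @: roots S.
  apply/setP => C; apply/imsetP/imsetP => [[i _ ->] | [i _ ->]]; last by exists i.
  exists (root S i); first by rewrite inE fingraph.root_root.
  by apply/setP => j; rewrite !inE; apply/same_connect/connect_root.
apply: card_in_imset => r r'; rewrite !inE => /eqP rr /eqP rr' crr'.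
have : r' \in comp r by rewrite crr' inE connect0.
by rewrite inE => /(fingraph.rootP csym); rewrite rr rr'.
Qed.

Lemma card_nonroots (S : {set E}) : #|nonroots S| = (n - ncomp S)%N.
Proof.
have := cardsC (roots S).
rewrite card_ord -ncomp_roots.
have -> : ~: roots S = nonroots S.
  by apply/setP => i; rewrite !inE.
by move: (ncomp S) #|nonroots S| => a b <-; rewrite addKn.
Qed.

Lemma ncomp_le (S : {set E}) : (ncomp S <= n)%N.
Proof. by rewrite ncomp_roots (leq_trans (max_card _)) ?card_ord. Qed.

(* Enlarging [S] can only merge components; if their number does not drop,
   the map sending each [S]-root to its [S']-root is a bijection on roots. *)
Lemma ncomp_eq_connect (S S' : {set E}) : S \subset S' -> ncomp S = ncomp S' ->
  forall i j, connect (adj S') i j -> connect (adj S) i j.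
Proof.
move=> sSS' ncompE i j cij.
have csym := adj_connect_sym S; have csym' := adj_connect_sym S'.
pose g := root S'.
have groot x : g (root S x) = root S' x.
  by apply/esym/(fingraph.rootP csym')/(connect_subset sSS')/connect_root.
have sroots : roots S' \subset g @: roots S.
  apply/fintype.subsetP => r; rewrite inE => /eqP rr; apply/imsetP.
  by exists (root S r); rewrite ?inE ?fingraph.root_root // groot rr.
have ginj : {in roots S &, injective g}.
  apply/imset_injP; rewrite eqn_leq leq_imset_card /=.
  by rewrite (leq_trans _ (subset_leq_card sroots)) // -!ncomp_roots ncompE.
have : root S i = root S j.
  apply: ginj; rewrite ?inE ?fingraph.root_root // !groot.
  exact/(fingraph.rootP csym').
by move/(fingraph.rootP csym).
Qed.

Lemma components_connect (S1 S2 : {set E}) : components S1 = components S2 ->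
  forall i j, connect (adj S1) i j -> connect (adj S2) i j.
Proof.
move=> compE i j cij.
have : [set j | connect (adj S1) i j] \in components S2.
  by rewrite -compE; apply/imsetP; exists i.
case/imsetP => k _ Ck.
have memC x : connect (adj S1) i x = connect (adj S2) k x.
  by have := congr1 (fun C : {set 'I_n} => x \in C) Ck; rewrite !inE.
have ki : connect (adj S2) k i by rewrite -memC connect0.
have kj : connect (adj S2) k j by rewrite -memC.
by apply: connect_trans kj; rewrite adj_connect_sym.
Qed.

Lemma connect_components (S1 S2 : {set E}) :
  (forall i j, connect (adj S1) i j = connect (adj S2) i j) ->
  components S1 = components S2.
Proof. by move=> connE; apply: eq_imset => i; apply/setP => j; rewrite !inE connE. Qed.

End Components.

Section Potentials.
Local Close Scope classical_set_scope.
Variables (R : realType) (n : nat) (E : finType).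
Variables (src tgt : E -> 'I_n) (phi : E -> R).
Hypothesis src_tgt : forall e, src e != tgt e.
Local Notation adj := (adj src tgt).
Local Notation joins := (joins src tgt).
Local Notation ogain := (ogain src tgt phi).
Local Notation is_circle := (is_circle src tgt).
Local Notation balanced := (balanced src tgt phi).

Definition potential (S : {set E}) (F : 'I_n -> R) :=
  forall e, e \in S -> phi e = F (src e) - F (tgt e).

Lemma ogain_potential e i j (F : 'I_n -> R) : joins e i j ->
  phi e = F (src e) - F (tgt e) -> ogain e i j = F i - F j.
Proof.
rewrite /Defs.ogain => /joinsP [[<- <-] | [<- <-]] ->; first by rewrite !eqxx.
by rewrite [tgt e == _]eq_sym (negbTE (src_tgt e)) opprB.
Qed.

Lemma potential_balanced S F : potential S F -> balanced S.
Proof.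
move=> SF k vs es [_ _ esS esj].
under eq_bigr do rewrite (ogain_potential (F := F) (esj _) (SF _ (esS _))).
exact: sum_ordS_telescope.
Qed.

Lemma balanced_subset (S S' : {set E}) : S' \subset S -> balanced S -> balanced S'.
Proof.
move=> sS'S bS k vs es [vsI esI esS' esj]; apply: bS; split => // t.
exact/(fintype.subsetP sS'S)/esS'.
Qed.

(* With a potential on [S], every edge of [S] contributes zero to the gain of a
   circle once the telescoping potential differences are subtracted. *)
Lemma circle_gain_potential T S (F : 'I_n -> R) k (vs : 'I_k.+1 -> 'I_n) es t0 :
  is_circle T vs es -> potential S F -> (forall t, t != t0 -> es t \in S) ->
  \sum_(t < k.+1) ogain (es t) (vs t) (vs (ordS t)) =
  ogain (es t0) (vs t0) (vs (ordS t0)) - (F (vs t0) - F (vs (ordS t0))).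
Proof.
move=> [_ _ _ esj] SF esS.
rewrite -[LHS]subr0 -[X in _ - X](sum_ordS_telescope (fun t => F (vs t))) -sumrB.
rewrite (bigD1 t0) //= big1 ?addr0 // => t tt0.
by rewrite (ogain_potential (esj t) (SF _ (esS t tt0))) subrr.
Qed.

Lemma circle_of_path (S : {set E}) e p :
  path (adj S) (tgt e) p -> uniq (tgt e :: p) -> last (tgt e) p = src e ->
  e \notin S ->
  exists k (vs : 'I_k.+1 -> 'I_n) (es : 'I_k.+1 -> E),
    [/\ is_circle (e |: S) vs es, es ord_max = e, vs ord_max = src e,
        vs (ordS ord_max) = tgt e & forall t, t != ord_max -> es t \in S].
Proof.
move=> pathp uniqp lastp eS.
set k := size p.
pose vsn t := nth (tgt e) (tgt e :: p) t.
have adjt t : (t < k)%N -> adj S (vsn t) (vsn t.+1) by apply: (pathP (tgt e)).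
pose ed a b := odflt e [pick f | (f \in S) && joins f a b].
have edP a b : adj S a b -> (ed a b \in S) && joins (ed a b) a b.
  by rewrite /ed; case: pickP => [f -> // | none] /existsP [f]; rewrite none.
have vsn_inj a b : (a < k.+1)%N -> (b < k.+1)%N -> vsn a = vsn b -> a = b.
  by move=> ak bk /eqP; rewrite nth_uniq // => /eqP.
have vsnk : vsn k = src e by rewrite /vsn -lastp -(last_cons (tgt e) (tgt e)) -nth_last.
have ltk (t : 'I_k.+1) : (t < k)%N = (t != ord_max).
  by rewrite -(inj_eq val_inj) /= ltn_neqAle -ltnS ltn_ord andbT.
have ordSE (t : 'I_k.+1) : t != ord_max -> val (ordS t) = t.+1.
  by rewrite -ltk /= => tk; rewrite modn_small.
pose vs (t : 'I_k.+1) := vsn t.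
pose es (t : 'I_k.+1) := if t != ord_max then ed (vs t) (vs (ordS t)) else e.
have esP t : t != ord_max -> (es t \in S) && joins (es t) (vs t) (vs (ordS t)).
  by move=> tk; rewrite /es tk; apply/edP; rewrite /vs ordSE //; apply/adjt; rewrite ltk.
have ordS_max : ordS (@ord_max k) = ord0 by apply: val_inj; rewrite /= modnn.
exists k, vs, es; split; last 4 first.
- by rewrite /es eqxx.
- exact: vsnk.
- by rewrite ordS_max.
- by move=> t tk; case/andP: (esP t tk).
split => [a b /vsn_inj ab | a b | t | t].
- exact/val_inj/ab.
- case: (eqVneq a ord_max) => [-> | ak]; case: (eqVneq b ord_max) => [-> // | bk].
  + by move=> eb; case/andP: (esP b bk); rewrite -eb /es eqxx /= (negbTE eS).
  + by move=> ea; case/andP: (esP a ak); rewrite ea /es eqxx /= (negbTE eS).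
  move=> eab; case/andP: (esP a ak) => _; case/andP: (esP b bk) => _.
  rewrite eab => /joins_endpoints jb /jb {jb}.
  rewrite /vs !ordSE // => -[[/vsn_inj ba _] | [/vsn_inj ba /vsn_inj ab]].
    exact/val_inj/esym/ba.
  move: ak bk; rewrite -!ltk => ak bk.
  by have := ab bk (ltn_ord a); have := ba (ltn_ord b) ak; lia.
- case: (eqVneq t ord_max) => [-> | tk]; first by rewrite /es eqxx setU11.
  by case/andP: (esP t tk); rewrite in_setU1 => ->; rewrite orbT.
- case: (eqVneq t ord_max) => [-> | tk]; last by case/andP: (esP t tk).
  by rewrite /es eqxx ordS_max /vs /= vsnk /joins !eqxx.
Qed.

Lemma circle_edge_potential (S : {set E}) e F :
  balanced (e |: S) -> potential S F -> e \notin S ->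
  connect (adj S) (tgt e) (src e) -> phi e = F (src e) - F (tgt e).
Proof.
move=> bS SF eS /connectP [p pathp]; case: (shortenP pathp) => q pathq uniqq _ lastq.
have [k [vs [es [circ esE vsE vsSE esS]]]] := circle_of_path pathq uniqq (esym lastq) eS.
have := bS _ _ _ circ; rewrite (circle_gain_potential circ SF esS) esE vsE vsSE.
by rewrite /Defs.ogain !eqxx => /eqP; rewrite subr_eq0 => /eqP.
Qed.

(* Induction on [#|S|]: add one edge [e] to a potential of [S :\ e]; if its
   endpoints are already connected, balance forces compatibility, otherwise
   shift the potential on the component of [tgt e]. *)
Lemma balanced_potential (S : {set E}) : balanced S -> exists F, potential S F.
Proof.
elim: {S}#|S| {-2}S (leqnn #|S|) => [|k IH] S.
  by rewrite leqn0 cards_eq0 => /eqP -> _; exists (fun=> 0) => e; rewrite inE.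
move=> cardS bS; case: (set_0Vmem S) => [-> | [e eS]].
  by exists (fun=> 0) => e; rewrite inE.
set S' := S :\ e.
have SE : S = e |: S' by rewrite finset.setD1K.
have eS' : e \notin S' by rewrite !inE eqxx.
have cardS' : (#|S'| <= k)%N by move: cardS; rewrite (cardsD1 e S) eS add1n ltnS.
have [F' SF'] := IH S' cardS' (balanced_subset (finset.subsetDl _ _) bS).
case: (boolP (connect (adj S') (tgt e) (src e))) => [conn | nconn].
  exists F' => f; rewrite SE in_setU1 => /orP [/eqP -> | /SF' //].
  by apply: (circle_edge_potential _ SF' eS' conn); rewrite -SE.
pose c := F' (src e) - F' (tgt e) - phi e.
exists (fun i => F' i + (if connect (adj S') (tgt e) i then c else 0)).
move=> f; rewrite SE in_setU1 => /orP [/eqP -> | fS'].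
  by rewrite (negbTE nconn) connect0 /c; ring.
have := same_connect1r (adj_connect_sym src tgt S') (adj_edge src tgt fS') (tgt e).
move=> ->; rewrite (SF' _ fS').
by case: ifP => _; ring.
Qed.
End Potentials.

Lemma row_free_gram (F : realFieldType) p q (M : 'M[F]_(p, q)) :
  row_free (M *m M^T) = row_free M.
Proof.
apply/idP/idP => [freeMM | freeM].
  by have := mxrankM_maxl M M^T; rewrite (eqP freeMM) /row_free eqn_leq rank_leq_row.
apply/inj_row_free => x xMM0.
have xM0 : x *m M = 0.
  set y := x *m M.
  have : (y *m y^T) 0 0 = 0 by rewrite trmx_mul mulmxA -(mulmxA x) xMM0 mul0mx mxE.
  rewrite mxE => yy0.
  have y2 : \sum_(j < q) y 0 j ^+ 2 = 0.
    by rewrite -[RHS]yy0; apply: eq_bigr => j _; rewrite [y^T _ _]mxE expr2.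
  apply/rowP => j; rewrite [RHS]mxE; apply/eqP; rewrite -sqrf_eq0; apply/eqP.
  by apply: (psumr_eq0P _ y2) => // i _; exact: sqr_ge0.
by apply: (row_free_inj freeM); rewrite xM0 mul0mx.
Qed.

Lemma row_free_col_mx_no_solution (F : fieldType) p q
    (A : 'M[F]_(p, q)) (b : 'rV[F]_q) :
  row_free (col_mx A b) -> forall x, x *m A != b.
Proof.
move=> freeAb x; apply/eqP => xAb.
have : row_mx x (-1) *m col_mx A b = 0 *m col_mx A b.
  by rewrite mul_row_col mulNmx mul1mx xAb subrr mul0mx.
move/(row_free_inj freeAb)/(congr1 rsubmx); rewrite row_mxKr linear0.
by move/matrixP/(_ 0 0)/eqP; rewrite !mxE eqxx oppr_eq0 oner_eq0.
Qed.

Lemma solutions_affine_flat (R : realType) p q (A : 'M[R]_(p, q)) (b : 'rV[R]_q) :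
  row_full A -> affine_flat [set x | x *m A = b] (p - q).
Proof.
move=> fullA; have /submxP [x0 x0A] := submx_full b fullA.
exists x0, (kermx A); split; first by rewrite mxrank_ker (eqP fullA).
apply/seteqP; split => x /=; rewrite sub_kermx mulmxBl.
  by move=> ->; rewrite x0A subrr.
by rewrite subr_eq0 => /eqP ->; rewrite x0A.
Qed.

Lemma affine_flat_dim_uniq (R : realType) d (A : set 'rV[R]_d) k1 k2 :
  affine_flat A k1 -> affine_flat A k2 -> k1 = k2.
Proof.
suff sub_dir (x0 x1 : 'rV[R]_d) (U V : 'M[R]_d) :
    [set x | (x - x0 <= U)%MS] = [set x | (x - x1 <= V)%MS] -> (U <= V)%MS.
  move=> [x0 [U [<- ->]]] [x1 [V [<- UV]]].
  apply/eqP; rewrite eqn_leq !mxrankS //.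
  - exact: (sub_dir _ _ _ _ (esym UV)).
  - exact: (sub_dir _ _ _ _ UV).
move=> UV; apply/row_subP => i.
have in_V x : (x - x0 <= U)%MS -> (x - x1 <= V)%MS.
  by move=> xU; have : [set x | (x - x0 <= U)%MS] x by []; rewrite UV.
have x0V := in_V x0; rewrite subrr sub0mx in x0V.
have x0iV := in_V (x0 + row i U); rewrite addrC addKr row_sub in x0iV.
rewrite -[row i U](addrK (x0 - x1)) addrA [_ + x0]addrC.
by rewrite addmx_sub ?eqmx_opp ?x0V ?x0iV.
Qed.

(* Adding the columns [k0] and [kd] isolates the last coordinate of a kernel
   vector. *)
Lemma paraboloid_lift_row_free (R : realFieldType) d m (t : R)
    (c : 'I_m -> 'I_d -> R) (delta : 'I_m -> R) (j0 : 'I_d) (k0 kd : 'I_m) :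
  t != 0 ->
  (forall j : 'I_d, exists k, forall l, c k l = t * (l == j :> nat)%:R) ->
  (forall l, c k0 l = t * (l == j0 :> nat)%:R) ->
  (forall l, c kd l = - t * (l == j0 :> nat)%:R) ->
  2 * t ^+ 2 != delta k0 + delta kd ->
  row_free (col_mx (\matrix_(l, k) (2 * c k l))
                   (\row_k (\sum_(l < d) c k l ^+ 2 - delta k))).
Proof.
move=> t_neq0 units ck0 ckd t_gen.
apply: inj_row_free => v; rewrite -(hsubmxK v) mul_row_col => /rowP v0.
set w := lsubmx v; set a := rsubmx v 0 0.
have col k :
    \sum_(l < d) w 0 l * (2 * c k l) + a * (\sum_(l < d) c k l ^+ 2 - delta k) = 0.
  have vk := v0 k; rewrite !mxE big_ord1 !mxE in vk; apply: (etrans _ vk).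
  congr (_ + _); last by rewrite /a mxE (ord1 0).
  by apply: eq_bigr => l _; rewrite [X in _ = _ * X]mxE.
have col_unit s k (j : 'I_d) : (forall l, c k l = s * (l == j :> nat)%:R) ->
    2 * s * w 0 j + a * (s ^+ 2 - delta k) = 0.
  move=> ck; move: (col k).
  have sqb (b : bool) : (b%:R : R) ^+ 2 = b%:R by case: b; rewrite ?expr0n ?expr1n.
  under [in X in X - _]eq_bigr do rewrite ck exprMn sqb.
  rewrite (sumr_delta (fun=> s ^+ 2)).
  rewrite (eq_bigr (fun l => 2 * s * w 0 l * (l == j :> nat)%:R)) ?sumr_delta //.
  by move=> l _; rewrite ck; ring.
have a0 : a = 0.
  have : a * (2 * t ^+ 2 - (delta k0 + delta kd)) = 0.
    by move: (col_unit _ _ _ ck0) (col_unit _ _ _ ckd); rewrite sqrrN; lra.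
  by move/eqP; rewrite mulf_eq0 subr_eq0 (negbTE t_gen) orbF => /eqP.
have w0 : w = 0.
  apply/rowP => j; rewrite [RHS]mxE; apply/eqP; have [k ck] := units j.
  move: (col_unit _ _ _ ck); rewrite a0 mul0r addr0 => /eqP.
  by rewrite !mulf_eq0 pnatr_eq0 (negbTE t_neq0).
rewrite w0 -row_mx0; congr row_mx; apply/rowP => i; rewrite (ord1 i) [RHS]mxE; exact: a0.
Qed.

Section Arrangement.
Variables (R : realType) (n d : nat) (E : finType).
Variables (src tgt : E -> 'I_n) (phi : E -> R).
Hypothesis src_tgt : forall e, src e != tgt e.
Local Notation adj := (adj src tgt).
Local Notation balanced := (balanced src tgt phi).
Local Notation flatI := (flatI src tgt phi).
Local Notation potential := (potential src tgt phi).
Local Notation nonroots := (nonroots src tgt).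
Local Notation root S := (fingraph.root (adj S)).

Definition sqnorm (x : 'rV[R]_d) := \sum_(l < d) x 0 l ^+ 2.

Lemma flatI_potential (Q : 'M[R]_(n, d)) S F P : potential S F ->
  flatI Q S P <-> forall i j, connect (adj S) i j ->
    sqdist P (row i Q) - F i = sqdist P (row j Q) - F j.
Proof.
move=> SF; rewrite -(edge_invariant_connect _ _ _ (fun i => sqdist P (row i Q) - F i)).
by split=> flatP e eS; have := flatP e eS; have := SF e eS; rewrite /hyp /pyth /=; lra.
Qed.

Lemma flatI_unbalanced (Q : 'M[R]_(n, d)) S : ~ balanced S -> flatI Q S = set0.
Proof.
move=> unbalS; apply/seteqP; split => P //= flatP; apply: unbalS.
apply: (potential_balanced src_tgt (F := fun i => sqdist P (row i Q))) => e eS.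
by rewrite -(flatP e eS).
Qed.

(* For each non-root [v] of the spanning forest of [(V, S)] with root [r],
   [P] lies on the flat iff [d(P,v)^2 - F v = d(P,r)^2 - F r]; the quadratic
   terms in [P] cancel, leaving the linear equation in column [v] below. *)
Definition flat_matrix (Q : 'M[R]_(n, d)) S : 'M[R]_(d, #|nonroots S|) :=
  \matrix_(l, k) (2 * (Q (enum_val k) l - Q (root S (enum_val k)) l)).

Definition flat_vector (Q : 'M[R]_(n, d)) S (F : 'I_n -> R) : 'rV[R]_#|nonroots S| :=
  \row_k ((sqnorm (row (enum_val k) Q) - F (enum_val k)) -
          (sqnorm (row (root S (enum_val k)) Q) - F (root S (enum_val k)))).

Lemma sqdist_sub (Q : 'M[R]_(n, d)) (F : 'I_n -> R) P i j :
  (sqdist P (row i Q) - F i) - (sqdist P (row j Q) - F j) =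
  (sqnorm (row i Q) - F i) - (sqnorm (row j Q) - F j) -
  \sum_(l < d) P 0 l * (2 * (Q i l - Q j l)).
Proof.
suff : sqdist P (row i Q) - sqdist P (row j Q) =
       sqnorm (row i Q) - sqnorm (row j Q) - \sum_(l < d) P 0 l * (2 * (Q i l - Q j l)).
  lra.
by rewrite -!sumrB; apply: eq_bigr => l _; rewrite !mxE; ring.
Qed.

Lemma flatI_linear_system (Q : 'M[R]_(n, d)) S F P : potential S F ->
  flatI Q S P <-> P *m flat_matrix Q S = flat_vector Q S F.
Proof.
move=> SF; apply: (iff_trans (flatI_potential _ _ SF)).
apply: (iff_trans (connect_invariant_nonroots src tgt S
  (fun i => sqdist P (row i Q) - F i))) => /=.
have entry k : (P *m flat_matrix Q S) 0 k =
    \sum_(l < d) P 0 l * (2 * (Q (enum_val k) l - Q (root S (enum_val k)) l)).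
  by rewrite mxE; apply: eq_bigr => l _; rewrite mxE.
split=> [eqk | /rowP eqk k].
  apply/rowP => k; have := sqdist_sub Q F P (enum_val k) (root S (enum_val k)).
  by rewrite eqk entry mxE; lra.
have := sqdist_sub Q F P (enum_val k) (root S (enum_val k)).
by move: (eqk k); rewrite entry mxE; lra.
Qed.

Definition flat_aug (Q : 'M[R]_(n, d)) S F : 'M[R]_(d + 1, #|nonroots S|) :=
  col_mx (flat_matrix Q S) (flat_vector Q S F).

(* [Q] is in generic position for [S] when the linear system of its flat has
   maximal rank (the augmented system when there are more equations than
   [d]); Gram determinants make this a polynomial condition on [Q]. *)
Definition generic_det (Q : 'M[R]_(n, d)) S F : R :=
  if (#|nonroots S| <= d)%N then \det ((flat_matrix Q S)^T *m flat_matrix Q S)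
  else \det (flat_aug Q S F *m (flat_aug Q S F)^T).

Lemma generic_det_small (Q : 'M[R]_(n, d)) S F : (#|nonroots S| <= d)%N ->
  (generic_det Q S F != 0) = row_full (flat_matrix Q S).
Proof.
move=> small; rewrite /generic_det small -unitfE -unitmxE -row_free_unit.
by rewrite -{2}[flat_matrix Q S]trmxK row_free_gram /row_free /row_full mxrank_tr.
Qed.

Lemma generic_det_large (Q : 'M[R]_(n, d)) S F : (d < #|nonroots S|)%N ->
  (generic_det Q S F != 0) = row_free (flat_aug Q S F).
Proof.
move=> large; rewrite /generic_det leqNgt large /=.
by rewrite -unitfE -unitmxE -row_free_unit row_free_gram.
Qed.

Lemma flatI_generic_affine (Q : 'M[R]_(n, d)) S F :
  potential S F -> (#|nonroots S| <= d)%N -> generic_det Q S F != 0 ->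
  affine_flat (flatI Q S) (d - #|nonroots S|).
Proof.
move=> SF small; rewrite generic_det_small // => /solutions_affine_flat.
have -> // : flatI Q S = [set P | P *m flat_matrix Q S = flat_vector Q S F].
by apply/seteqP; split => P /(flatI_linear_system _ _ SF).
Qed.

Lemma flatI_generic_empty (Q : 'M[R]_(n, d)) S F :
  potential S F -> (d < #|nonroots S|)%N -> generic_det Q S F != 0 ->
  flatI Q S = set0.
Proof.
move=> SF large; rewrite generic_det_large // => /row_free_col_mx_no_solution noP.
apply/seteqP; split => P //= /(flatI_linear_system _ _ SF)/eqP.
by rewrite (negbTE (noP P)).
Qed.

Lemma regular_flat_matrix S : regular_mx (fun Q : 'M[R]_(n, d) => flat_matrix Q S).
Proof.
move=> l k; under eq_fun do rewrite mxE.
by apply: regularM; [exact: regular_cst | apply: regularB; exact: regular_coord].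
Qed.

Lemma regular_sqnorm i : regular (fun Q : 'M[R]_(n, d) => sqnorm (row i Q)).
Proof.
apply: regular_sum => l; under eq_fun do rewrite mxE expr2.
by apply: regularM; exact: regular_coord.
Qed.

Lemma regular_flat_vector S F : regular_mx (fun Q : 'M[R]_(n, d) => flat_vector Q S F).
Proof.
move=> i k; under eq_fun do rewrite mxE.
by apply: regularB; apply: regularB; (exact: regular_sqnorm || exact: regular_cst).
Qed.

Lemma regular_generic_det S F : regular (fun Q : 'M[R]_(n, d) => generic_det Q S F).
Proof.
have reg_aug := regular_mx_col (@regular_flat_matrix S) (@regular_flat_vector S F).
have reg_matrix := @regular_flat_matrix S.
rewrite /generic_det; case: leqP => _; apply/regular_det/regular_mx_mul => //;
  exact: regular_mx_tr.
Qed.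

(* The point [c k] at the [k]-th non-root of [S], the origin elsewhere. *)
Definition at_nonroots S (c : 'I_#|nonroots S| -> 'I_d -> R) : 'M[R]_(n, d) :=
  \matrix_(i, l) \sum_(k | enum_val k == i) c k l.
Arguments at_nonroots : clear implicits.

Lemma at_nonroots_nonroot (S : {set E}) (c : 'I_#|nonroots S| -> 'I_d -> R) k l :
  at_nonroots S c (enum_val k) l = c k l.
Proof.
rewrite mxE (big_pred1 k) // => k'.
by rewrite (inj_eq enum_val_inj).
Qed.

Lemma at_nonroots_root (S : {set E}) (c : 'I_#|nonroots S| -> 'I_d -> R) i l :
  at_nonroots S c (root S i) l = 0.
Proof.
rewrite mxE big_pred0 // => k; apply/negbTE; apply: contraTneq (enum_valP k) => ->.
by rewrite inE negbK fingraph.root_root //; exact: adj_connect_sym.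
Qed.

Lemma flat_matrix_at_nonroots (S : {set E}) (c : 'I_#|nonroots S| -> 'I_d -> R) :
  flat_matrix (at_nonroots S c) S = \matrix_(l, k) (2 * c k l).
Proof.
apply/matrixP => l k.
by rewrite [LHS]mxE [RHS]mxE at_nonroots_nonroot at_nonroots_root subr0.
Qed.

Lemma flat_vector_at_nonroots (S : {set E}) F (c : 'I_#|nonroots S| -> 'I_d -> R) :
  flat_vector (at_nonroots S c) S F =
  \row_k (\sum_(l < d) c k l ^+ 2 - (F (enum_val k) - F (root S (enum_val k)))).
Proof.
apply/rowP => k; rewrite [LHS]mxE [RHS]mxE /sqnorm.
rewrite [X in _ - (X - _)]big1 => [|l _]; last by rewrite mxE at_nonroots_root expr0n.
under eq_bigr do rewrite mxE at_nonroots_nonroot.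
ring.
Qed.

Lemma generic_det_witness_small S F :
  (#|nonroots S| <= d)%N -> exists Q, generic_det Q S F != 0.
Proof.
move=> small; exists (at_nonroots S (fun k l => (k == l :> nat)%:R)).
rewrite generic_det_small // flat_matrix_at_nonroots /row_full -mxrank_tr.
apply: inj_row_free => v /rowP vM0; apply/rowP => k.
have := vM0 (widen_ord small k); rewrite !mxE.
under eq_bigr do rewrite !mxE /= mulrCA.
by rewrite -mulr_sumr sumr_delta => /eqP; rewrite mulf_eq0 pnatr_eq0 => /eqP.
Qed.

(* Non-roots [v_0, ..., v_(d-1)] go to [t e_0, ..., t e_(d-1)], all others to
   [- t e_0]; [t] is chosen so that [2 t^2] avoids the sum of the potential
   differences of the columns [v_0] and [v_d]. *)
Lemma generic_det_witness_large S F : (0 < d)%N ->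
  (d < #|nonroots S|)%N -> exists Q, generic_det Q S F != 0.
Proof.
move=> d_gt0 large.
pose delta (k : 'I_#|nonroots S|) := F (enum_val k) - F (root S (enum_val k)).
pose kd := Ordinal large; pose l0 := Ordinal d_gt0.
pose kk (j : 'I_d) := widen_ord (ltnW large) j.
pose t : R := if delta (kk l0) + delta kd == 2 then 2 else 1.
pose c (k : 'I_#|nonroots S|) (l : 'I_d) : R :=
  t * (if (k < d)%N then (l == k :> nat)%:R else - (l == l0 :> nat)%:R).
have c_kk j l : c (kk j) l = t * (l == j :> nat)%:R by rewrite /c /= ltn_ord.
exists (at_nonroots S c).
rewrite generic_det_large // /flat_aug flat_matrix_at_nonroots flat_vector_at_nonroots.
apply: (paraboloid_lift_row_free (t := t) (c := c) (delta := delta)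
  (j0 := l0) (k0 := kk l0) (kd := kd)) => //.
- by rewrite /t; case: ifP; rewrite ?pnatr_eq0 ?oner_eq0.
- by move=> j; exists (kk j); exact: c_kk.
- by move=> l; rewrite /c ltnn mulrN mulNr.
- rewrite /t; case: ifP => [/eqP -> | /negbT]; first by apply/eqP; lra.
  by rewrite expr1n mulr1 eq_sym.
Qed.

Lemma flatI_setU (Q : 'M[R]_(n, d)) S1 S2 :
  flatI Q (S1 :|: S2) = flatI Q S1 `&` flatI Q S2.
Proof.
apply/seteqP; split => P /=.
  by move=> flatP; split => e eS; apply: flatP; rewrite inE eS ?orbT.
by move=> [flat1 flat2] e; rewrite inE => /orP [/flat1 | /flat2].
Qed.

Lemma flatI_connect_eq (Q : 'M[R]_(n, d)) S1 S2 F :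
  potential S1 F -> potential S2 F ->
  (forall i j, connect (adj S1) i j = connect (adj S2) i j) ->
  flatI Q S1 = flatI Q S2.
Proof.
move=> SF1 SF2 connE; apply/seteqP; split => P.
  by move/(flatI_potential _ _ SF1) => flatP; apply/(flatI_potential _ _ SF2) => i j;
    rewrite -connE; apply: flatP.
by move/(flatI_potential _ _ SF2) => flatP; apply/(flatI_potential _ _ SF1) => i j;
  rewrite connE; apply: flatP.
Qed.

Definition some_potential S : 'I_n -> R :=
  if pselect (exists F, potential S F) is left ex then projT1 (cid ex) else fun=> 0.

Lemma some_potentialP S : balanced S -> potential S (some_potential S).
Proof.
move=> bS; rewrite /some_potential; case: pselect => [ex | []].
  exact: projT2 (cid ex).
exact: balanced_potential.
Qed.

Definition generic (Q : 'M[R]_(n, d)) :=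
  forall S, generic_det Q S (some_potential S) != 0.

Section GenericConfiguration.
Variable Q : 'M[R]_(n, d).
Hypothesis Qgen : generic Q.

Lemma generic_flatI S :
  ((~ balanced S \/ (d < n - ncomp src tgt S)%N) -> flatI Q S = set0) /\
  ((balanced S /\ (n - ncomp src tgt S <= d)%N) ->
     affine_flat (flatI Q S) (d - (n - ncomp src tgt S))).
Proof.
rewrite -card_nonroots; split=> [[unbalS | large] | [bS small]].
- exact: flatI_unbalanced.
- have [bS | unbalS] := pselect (balanced S); last exact: flatI_unbalanced.
  exact: flatI_generic_empty (some_potentialP bS) large (Qgen S).
- exact: flatI_generic_affine (some_potentialP bS) small (Qgen S).
Qed.

Lemma generic_flatI_nonempty S P : flatI Q S P ->
  balanced S /\ (n - ncomp src tgt S <= d)%N.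
Proof.
move=> SP; have [flat0 _] := generic_flatI S.
have flat_neq0 : flatI Q S <> set0 by move/seteqP => [/(_ P SP)].
split; first by apply: contrapT => unbalS; apply/flat_neq0/flat0; left.
by rewrite leqNgt; apply/negP => large; apply/flat_neq0/flat0; right.
Qed.

Lemma generic_flatI_dim S P : flatI Q S P ->
  affine_flat (flatI Q S) (d - (n - ncomp src tgt S)).
Proof. by move/generic_flatI_nonempty; exact: (generic_flatI S).2. Qed.

Lemma generic_flatI_eq S1 S2 :
  flatI Q S1 = flatI Q S2 /\ flatI Q S1 !=set0 <->
  [/\ balanced (S1 :|: S2), components src tgt S1 = components src tgt S2 &
      (n - d <= ncomp src tgt S1)%N].
Proof.
split=> [[flatE [P S1P]] | [bS12 compE ncomp_large]].
  have flat12 : flatI Q (S1 :|: S2) = flatI Q S1 by rewrite flatI_setU -flatE setIid.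
  have S12P : flatI Q (S1 :|: S2) P by rewrite flat12.
  have S2P : flatI Q S2 P by rewrite -flatE.
  have [bS12 small12] := generic_flatI_nonempty S12P.
  have [_ small1] := generic_flatI_nonempty S1P.
  have [_ small2] := generic_flatI_nonempty S2P.
  have dim1 := generic_flatI_dim S1P.
  have dim2 := generic_flatI_dim S2P; rewrite -flatE in dim2.
  have dim12 := generic_flatI_dim S12P; rewrite flat12 in dim12.
  have ncomp_le1 := ncomp_le src tgt S1; have ncomp_le2 := ncomp_le src tgt S2.
  have ncomp_le12 := ncomp_le src tgt (S1 :|: S2).
  have ncomp1 : ncomp src tgt S1 = ncomp src tgt (S1 :|: S2).
    by have := affine_flat_dim_uniq dim1 dim12; lia.
  have ncomp2 : ncomp src tgt S2 = ncomp src tgt (S1 :|: S2).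
    have := affine_flat_dim_uniq dim1 dim2.
    by have := affine_flat_dim_uniq dim1 dim12; lia.
  split => //; last by lia.
  apply: connect_components => i j; apply/idP/idP => conn.
    apply: (ncomp_eq_connect (finset.subsetUr S1 S2) ncomp2).
    exact: (connect_subset (finset.subsetUl S1 S2)).
  apply: (ncomp_eq_connect (finset.subsetUl S1 S2) ncomp1).
  exact: (connect_subset (finset.subsetUr S1 S2)).
have [F SF] := balanced_potential src_tgt bS12.
have SF1 : potential S1 F by move=> e eS; apply: SF; rewrite inE eS.
have SF2 : potential S2 F by move=> e eS; apply: SF; rewrite inE eS orbT.
split.
  apply: flatI_connect_eq SF1 SF2 _ => i j.
  by apply/idP/idP; apply: components_connect.
have small1 : (n - ncomp src tgt S1 <= d)%N by lia.
have bS1 : balanced S1 by apply: balanced_subset bS12; exact: finset.subsetUl.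
have [P0 [U [_ ->]]] := (generic_flatI S1).2 (conj bS1 small1).
by exists P0; rewrite /= subrr sub0mx.
Qed.
End GenericConfiguration.
End Arrangement.

Unset Implicit Arguments.
Theorem theorem5p1 (R : realType) (n d : nat) (E : finType)
    (src tgt : E -> 'I_n) (phi : E -> R)
    (hst : forall e, src e != tgt e)
    (hd : (0 < d)%N) (hdn : (d < n)%N) :
  exists G : set 'M[R]_(n, d),
    [/\ open G, dense G,
        (forall Q, G Q -> forall i j : 'I_n, i != j -> row i Q != row j Q) &
        forall Q, G Q ->
          (forall S : {set E},
              let m := (n - ncomp src tgt S)%N in
              ((~ balanced src tgt phi S \/ (d < m)%N) ->
                 flatI src tgt phi Q S = set0) /\
              ((balanced src tgt phi S /\ (m <= d)%N) ->
                 affine_flat (flatI src tgt phi Q S) (d - m)))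
          /\
          (forall S1 S2 : {set E},
              (flatI src tgt phi Q S1 = flatI src tgt phi Q S2 /\
               flatI src tgt phi Q S1 !=set0)
              <->
              [/\ balanced src tgt phi (S1 :|: S2),
                  components src tgt S1 = components src tgt S2 &
                  (n - d <= ncomp src tgt S1)%N])].
Proof.
pose l0 : 'I_d := Ordinal hd.
pose I := ({p : 'I_n * 'I_n | p.1 != p.2} + {set E})%type.
pose f (k : I) (Q : 'M[R]_(n, d)) : R :=
  match k with
  | inl p => Q (sval p).1 l0 - Q (sval p).2 l0
  | inr S0 => generic_det src tgt Q S0 (some_potential src tgt phi S0)
  end.
have [Gopen Gdense] : open [set Q | forall k, f k Q != 0] /\
                      dense [set Q | forall k, f k Q != 0].
  apply: open_dense_nonzero_family => [[p | S] | [[[i j] /= ij] | S]] /=.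
  - by apply: regularB; exact: regular_coord.
  - exact: regular_generic_det.
  - exists (\matrix_(a, b) (a : nat)%:R); rewrite !mxE subr_eq0 eqr_nat.
    by apply: contra ij => /eqP ij; apply/eqP/val_inj.
  - case: (leqP #|nonroots src tgt S| d) => [small | large].
      exact: generic_det_witness_small.
    exact: generic_det_witness_large.
exists [set Q | forall k, f k Q != 0]; split => // [Q fQ i j ij | Q fQ].
  apply: contraNneq (fQ (inl (exist _ (i, j) ij))).
  move=> /(congr1 (fun r : 'rV[R]_d => r 0 l0)).
  by rewrite !mxE /= => ->; rewrite subrr.
have Qgen : generic src tgt phi Q by move=> S; exact: fQ (inr S).
by split=> [S | S1 S2]; [exact: generic_flatI | exact: generic_flatI_eq].
Qed.
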